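(* Let $(\mathcal S,\mathcal A,P,R,d_0)$ be a finite episodic MDP with horizon $T$ and $\pi_\theta$ a parameterized policy satisfying the score bound described in the context. Then there exists a finite constant $L_e$ such that for all $\gamma\in[0,1]$ (and all $\theta$), $$\Big\|\sum_{s\in\mathcal S}V^{\pi_\theta}_\gamma(s)\,\frac{\partial}{\partial\theta}d^{\pi_\theta}_\gamma(s)\Big\|\le(1-\gamma)L_e.$$
   Context: Setting: $\mathcal S$ is a finite set of states, $\mathcal A$ a finite set of actions, $P(s'\mid s,a)$ a transition function, $R(\cdot\mid s,a,s')$ a reward distribution supported in $[-R_{\max},R_{\max}]$, and $d_0$ an initial state distribution. There is a terminal absorbing state in which the agent stays and receives reward $0$. An episode: $S_0\sim d_0$; at each time $t$, $A_t\sim\pi_\theta(\cdot\mid S_t)$, $S_{t+1}\sim P(\cdot\mid S_t,A_t)$, $R_t\sim R(\cdot\mid S_t,A_t,S_{t+1})$; the horizon $T$ is fixed and $S_T$ is terminal. The policy $\pi_\theta(a\mid s)$ is positive and differentiable in $\theta\in\mathbb R^n$, and there is a constant $L_\pi$ with $\big\|\frac{\partial}{\partial\theta}\ln\pi_\theta(a\mid s)\big\|\le L_\pi$ for all $\theta,s,a$. Probabilities and expectations are under $\pi=\pi_\theta$. For $\gamma\in[0,1]$ (with $0^0=1$), $V^{\pi_\theta}_\gamma(s)=\mathbb E\big[\sum_{i=t}^{T}\gamma^{i-t}R_i\,\big|\,S_t=s\big]$, treated as a function of $s$ alone (the conditional expectation is assumed not to depend on $t$), and $d^{\pi_\theta}_\gamma(s)=d_0(s)+(1-\gamma)\sum_{t=1}^{T-1}\Pr(S_t=s)$.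 *)

From HB Require Import structures.
From mathcomp Require Import all_boot all_order all_algebra.
From mathcomp Require Import all_classical all_reals all_analysis.
Set Implicit Arguments. Unset Strict Implicit. Unset Printing Implicit Defensive.
Import Order.TTheory GRing.Theory Num.Theory.
Import numFieldNormedType.Exports.
Local Open Scope ring_scope.

Section MDP.
Variables (R : realType) (S A : finType) (n T : nat).

Definition euclid (x : 'rV[R]_n) : R := Num.sqrt (\sum_(i < n) x ord0 i ^+ 2).

Definition grad (f : 'rV[R]_n -> R) (th : 'rV[R]_n) : 'rV[R]_n :=
  \row_(i < n) derive f th (delta_mx 0 i).

(* trajectories: states S_0..S_{T+1}, actions A_0..A_T *)
Definition traj := ({ffun 'I_T.+2 -> S} * {ffun 'I_T.+1 -> A})%type.
Definition st (tau : traj) (t : nat) : S := tau.1 (inord t).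
Definition ac (tau : traj) (t : nat) : A := tau.2 (inord t).

Variables (P : S -> A -> S -> R) (d0 : S -> R) (r : S -> A -> S -> R)
          (pi : 'rV[R]_n -> S -> A -> R).

Definition pathprob (th : 'rV[R]_n) (tau : traj) : R :=
  d0 (st tau 0) * \prod_(t < T.+1)
    (pi th (st tau t) (ac tau t) * P (st tau t) (ac tau t) (st tau t.+1)).

Definition PrSt (th : 'rV[R]_n) (t : nat) (s : S) : R :=
  \sum_(tau : traj) pathprob th tau * (st tau t == s)%:R.

(* E[ sum_{i=t}^T gamma^(i-t) R_i ; S_t = s ] (R_i replaced by its mean r) *)
Definition retSt (th : 'rV[R]_n) (g : R) (t : nat) (s : S) : R :=
  \sum_(tau : traj) pathprob th tau * (st tau t == s)%:R *
    \sum_(t <= i < T.+1) g ^+ (i - t) * r (st tau i) (ac tau i) (st tau i.+1).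

Definition condret (th : 'rV[R]_n) (g : R) (t : nat) (s : S) : R :=
  retSt th g t s / PrSt th t s.

(* V_gamma(s): the conditional expectation at any time t <= T where S_t = s
   has positive probability (assumed independent of t); 0 if never reached *)
Definition Vg (th : 'rV[R]_n) (g : R) (s : S) : R :=
  match [pick t : 'I_T.+1 | 0 < PrSt th t s] with
  | Some t => condret th g t s
  | None => 0
  end.

Definition dg (th : 'rV[R]_n) (g : R) (s : S) : R :=
  d0 s + (1 - g) * \sum_(1 <= t < T) PrSt th t s.

End MDP.

From HB Require Import structures.
From mathcomp Require Import all_boot all_order all_algebra.
From mathcomp Require Import all_classical all_reals all_analysis.
Import Order.TTheory GRing.Theory Num.Theory.
Import numFieldNormedType.Exports.
Local Open Scope ring_scope.

(** The factor [1 - g] comes for free: [d_g(s) = d0(s) + (1 - g) F(s)] where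
    [F(s) = sum_{t=1}^{T-1} Pr(S_t = s)] and [d0] does not depend on [th].
    It remains to bound [|V_g|] and the partial derivatives of [F]
    uniformly in [g] and [th].  Returns are at most [(T+1) |Rmax|] since
    [0 <= g <= 1], and the score bound gives [|d pi| = pi |d ln pi| <= Lpi],
    so by the product rule every partial derivative of a trajectory
    probability is at most [(T+1) |Lpi|]. *)

Set Implicit Arguments. Unset Strict Implicit.

Section DirectionalDeriveBound.
Variables (R : realType) (n : nat).
Local Notation V := 'rV[R]_n.

Definition dbound (f : V -> R) (x v : V) (B : R) :=
  derivable f x v /\ `|'D_v f x| <= B.

Lemma dbound_le (f : V -> R) x v B B' : B <= B' -> dbound f x v B -> dbound f x v B'.
Proof. by move=> BB' [df Df]; split => //; exact: le_trans BB'. Qed.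

Lemma dbound_cst (c : R) x v : dbound (fun=> c) x v 0.
Proof. by split; [exact: derivable_cst | rewrite (derive_cst c) normr0]. Qed.

Lemma dboundD (f g : V -> R) x v Bf Bg :
  dbound f x v Bf -> dbound g x v Bg -> dbound (f + g) x v (Bf + Bg).
Proof.
move=> [df Df] [dg Dg]; split; first exact: derivableD.
by rewrite deriveD // (le_trans (ler_normD _ _)) // lerD.
Qed.

Lemma dbound_sum (I : Type) (s : seq I) (F : I -> V -> R) (B : I -> R) x v :
  (forall i, dbound (F i) x v (B i)) ->
  dbound (fun y => \sum_(i <- s) F i y) x v (\sum_(i <- s) B i).
Proof.
move=> dF; elim: s => [|i s IHs].
  by rewrite big_nil; under eq_fun do rewrite big_nil; exact: dbound_cst.
rewrite big_cons; under eq_fun do rewrite big_cons.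
exact: dboundD.
Qed.

Lemma dboundM (f g : V -> R) x v a b Bf Bg :
  dbound f x v Bf -> dbound g x v Bg -> `|f x| <= a -> `|g x| <= b ->
  0 <= Bf -> 0 <= Bg -> dbound (f * g) x v (a * Bg + b * Bf).
Proof.
move=> [df Df] [dg Dg] fa gb Bf0 Bg0; split; first exact: derivableM.
rewrite deriveM // (le_trans (ler_normD _ _)) // lerD // normrM ler_pM //.
Qed.

Lemma dboundZl (c : R) (f : V -> R) x v B :
  dbound f x v B -> dbound (fun y => c * f y) x v (`|c| * B).
Proof.
move=> [df Df]; have -> : (fun y => c * f y) = c \*o f by [].
split; last by rewrite deriveMl // normrM ler_wpM2l.
by have -> : c \*o f = cst c * f by []; apply: derivableM => //; exact: derivable_cst.
Qed.

Lemma dboundZr (c : R) (f : V -> R) x v B :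
  dbound f x v B -> dbound (fun y => f y * c) x v (`|c| * B).
Proof. by move=> /(dboundZl c); under eq_fun do rewrite mulrC. Qed.

Lemma dbound_prod m (F : 'I_m -> V -> R) x v B :
  0 <= B -> (forall i, dbound (F i) x v B) -> (forall i, `|F i x| <= 1) ->
  dbound (fun y => \prod_(i < m) F i y) x v (m%:R * B).
Proof.
move=> B0; elim: m F => [|m IHm] F dF F1.
  by rewrite mul0r; under eq_fun do rewrite big_ord0; exact: dbound_cst.
under eq_fun do rewrite big_ord_recr.
have prod1 : `|\prod_(i < m) F (widen_ord (leqnSn m) i) x| <= 1.
  by rewrite normr_prod prodr_ile1 // => i _; rewrite normr_ge0 F1.
apply: dbound_le (dboundM (IHm _ _ _) (dF ord_max) prod1 (F1 ord_max) _ B0) => //.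
- by rewrite !mul1r mulrSr mulrDl mul1r addrC.
- by rewrite mulr_ge0.
Qed.

Lemma derive_ln (f : V -> R) x v : differentiable f x -> 0 < f x ->
  'D_v (fun y => ln (f y)) x = 'D_v f x / f x.
Proof.
move=> df fx0.
have dl : differentiable (@ln R) (f x).
  by apply/derivable1_diffP; apply: ex_derive; exact: is_derive1_ln.
rewrite (deriveE v (differentiable_comp df dl)) (deriveE v df) diff_comp //=.
rewrite -['d f x v]scaler1 linearZ /= -deriveE // -(deriveE (1 : R) dl).
by have [_ ->] := is_derive1_ln fx0; rewrite [_%:A]mulr1.
Qed.

Lemma dbound_ln (f : V -> R) x v L :
  differentiable f x -> 0 < f x <= 1 ->
  `|'D_v (fun y => ln (f y)) x| <= L -> dbound f x v L.
Proof.
move=> df /andP[fx0 fx1]; rewrite derive_ln // => DlnL.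
split; first exact: diff_derivable.
rewrite -(divfK (lt0r_neq0 fx0) ('D_v f x)) mulrC normrM (gtr0_norm fx0) -[L]mul1r.
by rewrite ler_pM // ltW.
Qed.

Lemma coord_le_euclid (u : V) i : `|u ord0 i| <= euclid u.
Proof.
rewrite /euclid -sqrtr_sqr ler_sqrt ?sumr_ge0 // => [|j _]; last exact: sqr_ge0.
by rewrite (bigD1 i) //= lerDl sumr_ge0 // => j _; exact: sqr_ge0.
Qed.

Lemma euclid_le_coord_bound (u : V) c :
  0 <= c -> (forall i, `|u ord0 i| <= c) -> euclid u <= c * Num.sqrt n%:R.
Proof.
move=> c0 uc; rewrite /euclid.
apply: (@le_trans _ _ (Num.sqrt (\sum_(i < n) c ^+ 2))).
  rewrite ler_sqrt; last by rewrite sumr_ge0 // => i _; exact: sqr_ge0.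
  by apply: ler_sum => i _; rewrite -real_normK ?num_real // lerXn2r ?nnegrE.
rewrite sumr_const card_ord -[c ^+ 2 *+ n]mulr_natr.
by rewrite sqrtrM ?sqr_ge0 // sqrtr_sqr ger0_norm.
Qed.

End DirectionalDeriveBound.

Lemma le1_of_sum1 (R : numDomainType) (I : finType) (F : I -> R) j :
  (forall i, 0 <= F i) -> \sum_i F i = 1 -> F j <= 1.
Proof. by move=> F0 <-; rewrite (bigD1 j) //= lerDl sumr_ge0. Qed.

Section EpisodicMDP.
Variables (R : realType) (S A : finType) (n T : nat).
Variables (P : S -> A -> S -> R) (d0 : S -> R) (r : S -> A -> S -> R).
Variables (pi : 'rV[R]_n -> S -> A -> R) (Rmax Lpi : R).
Hypothesis P_ge0 : forall s a s', 0 <= P s a s'.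
Hypothesis P_sum1 : forall s a, \sum_(s' : S) P s a s' = 1.
Hypothesis d0_ge0 : forall s, 0 <= d0 s.
Hypothesis d0_sum1 : \sum_(s : S) d0 s = 1.
Hypothesis r_bound : forall s a s', `|r s a s'| <= Rmax.
Hypothesis pi_gt0 : forall th s a, 0 < pi th s a.
Hypothesis pi_sum1 : forall th s, \sum_(a : A) pi th s a = 1.
Hypothesis pi_diff : forall th s a, differentiable (fun th' => pi th' s a) th.
Hypothesis score_bound :
  forall th s a, euclid (grad (fun th' => ln (pi th' s a)) th) <= Lpi.

Local Notation traj := (traj S A T).
Local Notation pathprob := (pathprob P d0 pi).
Local Notation PrSt := (PrSt T P d0 pi).
Local Notation dg := (dg T P d0 pi).
Local Notation e_ i := (delta_mx 0 i : 'rV[R]_n).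

Local Notation Bpath := (T.+1%:R * `|Lpi|).
Local Notation Bret := (`|Rmax| *+ T.+1).

Lemma dbound_policy th s a i : dbound (fun th' => pi th' s a) th (e_ i) `|Lpi|.
Proof.
apply: dbound_le (ler_norm Lpi) (dbound_ln (pi_diff _ _ _) _ _).
  by rewrite pi_gt0 le1_of_sum1 // => b; exact: ltW.
have := le_trans (coord_le_euclid _ i) (score_bound th s a).
by rewrite mxE.
Qed.

Lemma pathprob_ge0 th (tau : traj) : 0 <= pathprob th tau.
Proof.
rewrite mulr_ge0 // prodr_ge0 // => t _.
by rewrite mulr_ge0 // ltW.
Qed.

Lemma dbound_pathprob th (tau : traj) i :
  dbound (fun th' => pathprob th' tau) th (e_ i) Bpath.
Proof.
have P_le1 s a s' : `|P s a s'| <= 1 by rewrite ger0_norm // le1_of_sum1.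
have pi_le1 s a : `|pi th s a| <= 1.
  by rewrite gtr0_norm // le1_of_sum1 // => b; exact: ltW.
have d0_le1 : `|d0 (st tau 0)| <= 1 by rewrite ger0_norm // le1_of_sum1.
apply: dbound_le (dboundZl _ (dbound_prod (B := `|Lpi|) _ _ _)).
- by rewrite ler_piMl // mulr_ge0.
- exact: normr_ge0.
- move=> t; apply: dbound_le (dboundZr _ (dbound_policy _ _ _ i)).
  by rewrite ler_piMl.
- by move=> t; rewrite normrM mulr_ile1.
Qed.

Lemma dbound_PrSt th t s i :
  dbound (fun th' => PrSt th' t s) th (e_ i) (\sum_(tau : traj) Bpath).
Proof.
apply: dbound_sum => tau; apply: dbound_le (dboundZr _ (dbound_pathprob _ _ i)).
by rewrite ler_piMl ?mulr_ge0 // ger0_norm // lern1 leq_b1.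
Qed.

Lemma dbound_dg th g s i :
  dbound (fun th' => dg th' g s) th (e_ i)
    (`|1 - g| * \sum_(1 <= t < T) \sum_(tau : traj) Bpath).
Proof.
have -> : (fun th' => dg th' g s) =
    cst (d0 s) + (fun th' => (1 - g) * \sum_(1 <= t < T) PrSt th' t s) by [].
rewrite -[X in dbound _ _ _ X]add0r; apply: dboundD; first exact: dbound_cst.
by apply/dboundZl/dbound_sum => t; exact: dbound_PrSt.
Qed.

Lemma retSt_bound th g t s : 0 <= g <= 1 ->
  `|retSt T P d0 r pi th g t s| <= PrSt th t s * Bret.
Proof.
move=> /andP[g0 g1]; rewrite mulr_suml (le_trans (ler_norm_sum _ _ _)) //.
apply: ler_sum => tau _.
have w_ge0 : 0 <= pathprob th tau * (st tau t == s)%:R.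
  by rewrite mulr_ge0 ?pathprob_ge0 ?ler0n.
rewrite normrM (ger0_norm w_ge0) ler_wpM2l //.
apply: le_trans (ler_norm_sum _ _ _) _.
apply: (@le_trans _ _ (\sum_(t <= i < T.+1) `|Rmax|)).
  apply: ler_sum => j _; rewrite normrM normrX (ger0_norm g0) -[`|Rmax|]mul1r.
  by rewrite ler_pM ?exprn_ge0 ?exprn_ile1 // (le_trans (r_bound _ _ _)) ?ler_norm.
by rewrite sumr_const_nat ler_wpMn2l ?leq_subr ?normr_ge0.
Qed.

Lemma Vg_bound th g s : 0 <= g <= 1 -> `|Vg T P d0 r pi th g s| <= Bret.
Proof.
move=> g01; rewrite /Vg; case: pickP => [t Pt_gt0 | _]; last first.
  by rewrite normr0 mulrn_wge0.
rewrite /condret normrM normfV (gtr0_norm Pt_gt0) ler_pdivrMr // mulrC.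
exact: retSt_bound.
Qed.

End EpisodicMDP.

Theorem lemma3 (R : realType) (S A : finType) (n T : nat)
  (P : S -> A -> S -> R) (d0 : S -> R) (r : S -> A -> S -> R)
  (pi : 'rV[R]_n -> S -> A -> R) (term : S) (Rmax Lpi : R) :
  (forall s a s', 0 <= P s a s') ->
  (forall s a, \sum_(s' : S) P s a s' = 1) ->
  (forall s, 0 <= d0 s) ->
  \sum_(s : S) d0 s = 1 ->
  (forall s a s', `|r s a s'| <= Rmax) ->
  (forall a, P term a term = 1) ->
  (forall a s', r term a s' = 0) ->
  (forall th s a, 0 < pi th s a) ->
  (forall th s, \sum_(a : A) pi th s a = 1) ->
  (forall th s a, differentiable (fun th' => pi th' s a) th) ->
  (forall th s a, euclid (grad (fun th' => ln (pi th' s a)) th) <= Lpi) ->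
  (* S_T is terminal *)
  (forall th, PrSt T P d0 pi th T term = 1) ->
  (* the conditional expectation defining V does not depend on t *)
  (forall th g (t t' : nat) s, (t <= T)%N -> (t' <= T)%N ->
     0 < PrSt T P d0 pi th t s -> 0 < PrSt T P d0 pi th t' s ->
     condret T P d0 r pi th g t s = condret T P d0 r pi th g t' s) ->
  exists Le : R, forall g : R, 0 <= g <= 1 -> forall th : 'rV[R]_n,
    euclid (\sum_(s : S) Vg T P d0 r pi th g s *: grad (fun th' => dg T P d0 pi th' g s) th)
      <= (1 - g) * Le.
Proof.
move=> P_ge0 P_sum1 d0_ge0 d0_sum1 r_bound _ _ pi_gt0 pi_sum1 pi_diff score _ _.
set BF := \sum_(1 <= t < T) \sum_(tau : traj S A T) T.+1%:R * `|Lpi|.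
set M := \sum_(s : S) `|Rmax| *+ T.+1 * BF.
have BF_ge0 : 0 <= BF by rewrite !sumr_ge0 // => *; rewrite mulr_ge0.
have M_ge0 : 0 <= M by rewrite sumr_ge0 // => s _; rewrite mulr_ge0 ?mulrn_wge0.
exists (M * Num.sqrt n%:R) => g g01 th; have /andP[_ g_le1] := g01.
rewrite mulrA; apply: euclid_le_coord_bound => [|i].
  by rewrite mulr_ge0 ?subr_ge0.
rewrite summxE (le_trans (ler_norm_sum _ _ _)) // mulr_sumr.
apply: ler_sum => s _; rewrite !mxE normrM mulrCA.
have [_ Ddg] := dbound_dg T P_ge0 P_sum1 d0_ge0 d0_sum1 pi_gt0 pi_sum1 pi_diff
  score th g s i.
rewrite [`|1 - g|]ger0_norm ?subr_ge0 // in Ddg.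
by apply: ler_pM => //; exact: (Vg_bound T P_ge0 d0_ge0 r_bound pi_gt0).
Qed.
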